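(* Let $(X,d)$ be a metric space. The following are equivalent: (i) $(X,d)$ is ultrametric; (ii) for every $W\subseteq X$ and every $\varepsilon>0$, $$\mathcal M^*_\varepsilon(W)=\hat{\mathcal N}^X_\varepsilon(W)=\hat{\mathcal N}_\varepsilon(W)=\hat{\mathcal M}_\varepsilon(W);$$ (iii) for every compact $W\subseteq X$ and every $\varepsilon>0$, $\mathcal N_\varepsilon(W)=\mathcal M_\varepsilon(W)$.
   Context: $(X,d)$ is ultrametric if $d(x,y)\le\max\{d(x,z),d(z,y)\}$ for all $x,y,z$. Closed balls: $B(c,r)=\{x:d(x,c)\le r\}$. $C$ is an $\varepsilon$-net for $W$ if $W\subseteq\bigcup_{c\in C}B(c,\varepsilon)$. $A$ is $\varepsilon$-distinguishable if $d(x,y)>\varepsilon$ for distinct $x,y\in A$. For a totally bounded $W$, the covering number $\mathcal N_\varepsilon(W)$ is the smallest cardinality of a subset of $W$ which is an $\varepsilon$-net for $W$, and the packing number $\mathcal M_\varepsilon(W)$ is the maximal cardinality of an $\varepsilon$-distinguishable subset of $W$. For arbitrary $W,A\subseteq X$: $\hat{\mathcal N}^A_\varepsilon(W)$ is the minimal cardinality of an $\varepsilon$-net $C\subseteq A$ for $W$; $\hat{\mathcal N}_\varepsilon(W):=\hat{\mathcal N}^W_\varepsilon(W)$; $\hat{\mathcal M}_\varepsilon(W)$ is the smallest cardinality of an $\varepsilon$-distinguishable $A\subseteq W$ that is maximal under inclusion among $\varepsilon$-distinguishable subsets of $W$; $\mathcal M^*_\varepsilon(W)$ is the smallest cardinal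 $\ge\operatorname{card}(A)$ for every $\varepsilon$-distinguishable $A\subseteq W$. *)

From Stdlib Require Import Reals List.
Open Scope R_scope.

Section Defs.
Context {X : Type} (d : X -> X -> R).

Definition is_metric : Prop :=
  (forall x y, d x y = 0 <-> x = y) /\
  (forall x y, d x y = d y x) /\
  (forall x y z, d x y <= d x z + d z y).

Definition ultrametric : Prop :=
  forall x y z, d x y <= Rmax (d x z) (d z y).

Definition subset (A B : X -> Prop) : Prop := forall x, A x -> B x.

Definition cball (c : X) (r : R) (x : X) : Prop := d x c <= r.

Definition is_net (eps : R) (W C : X -> Prop) : Prop :=
  forall w, W w -> exists c, C c /\ cball c eps w.

Definition distinguishable (eps : R) (A : X -> Prop) : Prop :=
  forall x y, A x -> A y -> x <> y -> eps < d x y.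

Definition is_open (U : X -> Prop) : Prop :=
  forall x, U x -> exists r, 0 < r /\ forall y, d y x < r -> U y.

Definition m_compact (W : X -> Prop) : Prop :=
  forall (I : Type) (U : I -> X -> Prop),
    (forall i, is_open (U i)) ->
    (forall w, W w -> exists i, U i w) ->
    exists l : list I, forall w, W w -> exists i, In i l /\ U i w.

Definition cov_num (eps : R) (W : X -> Prop) (n : nat) : Prop :=
  (exists l : list X, NoDup l /\ length l = n /\ (forall x, In x l -> W x)
     /\ is_net eps W (fun c => In c l)) /\
  (forall l : list X, NoDup l -> (forall x, In x l -> W x) ->
     is_net eps W (fun c => In c l) -> (n <= length l)%nat).

Definition pack_num (eps : R) (W : X -> Prop) (n : nat) : Prop :=
  (exists l : list X, NoDup l /\ length l = n /\ (forall x, In x l -> W x)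
     /\ distinguishable eps (fun c => In c l)) /\
  (forall l : list X, NoDup l -> (forall x, In x l -> W x) ->
     distinguishable eps (fun c => In c l) -> (length l <= n)%nat).

End Defs.

Definition card_le {T U : Type} (A : T -> Prop) (B : U -> Prop) : Prop :=
  exists f : T -> U, (forall x, A x -> B (f x)) /\
    (forall x y, A x -> A y -> f x = f y -> x = y).

Definition card_eq {T U : Type} (A : T -> Prop) (B : U -> Prop) : Prop :=
  exists f : T -> U, (forall x, A x -> B (f x)) /\
    (forall x y, A x -> A y -> f x = f y -> x = y) /\
    (forall y, B y -> exists x, A x /\ f x = y).

Section Cardinals.
Context {X : Type} (d : X -> X -> R).

(* "hat N^A_eps(W) has cardinality card K": there is an eps-net C ⊆ A for W
   of minimal cardinality among such nets, and card C = card K *)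
Definition Nhat_val (eps : R) (A W : X -> Prop) (K : X -> Prop) : Prop :=
  exists C, subset C A /\ is_net d eps W C /\
    (forall C', subset C' A -> is_net d eps W C' -> card_le C C') /\
    card_eq C K.

Definition maximal_distinguishable (eps : R) (W A : X -> Prop) : Prop :=
  subset A W /\ distinguishable d eps A /\
  (forall B, subset B W -> distinguishable d eps B -> subset A B -> subset B A).

Definition Mhat_val (eps : R) (W : X -> Prop) (K : X -> Prop) : Prop :=
  exists A, maximal_distinguishable eps W A /\
    (forall A', maximal_distinguishable eps W A' -> card_le A A') /\
    card_eq A K.

(* "M*_eps(W) has cardinality card K": card K is an upper bound of the
   cardinalities of eps-distinguishable subsets of W, and is below every
   such upper bound (cardinals of sets of any type) *)
Definition Mstar_val (eps : R) (W : X -> Prop) (K : X -> Prop) : Prop :=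
  (forall A, subset A W -> distinguishable d eps A -> card_le A K) /\
  (forall (U : Type) (K' : U -> Prop),
     (forall A, subset A W -> distinguishable d eps A -> card_le A K') ->
     card_le K K').

End Cardinals.

(* In an ultrametric space the relation "d x y <= eps" is an equivalence
   relation whose classes are the closed eps-balls.  Two points of an
   eps-distinguishable set never share a class, and every eps-net meets
   every class (of a point of W).  Choosing one point of W in each class
   gives a set K that is both an eps-distinguishable subset of W and an
   eps-net for W; every distinguishable subset of W injects into every net,
   so K realises all four cardinals of (ii) at once, and for compact W the
   same argument run on a finite ball cover gives N_eps(W) = M_eps(W).

   Conversely, if d x y > max(d x z, d z y) =: eps > 0, then on
   W = {x, y, z} the singleton {z} is an eps-net while {x, y} is
   eps-distinguishable, which contradicts both (ii) and (iii). *)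

From Stdlib Require Import Reals List Lra Lia Classical ClassicalEpsilon
  FunctionalExtensionality PropExtensionality.
Import ListNotations.
Open Scope R_scope.

Definition subsingleton {T : Type} (A : T -> Prop) : Prop :=
  forall a a', A a -> A a' -> a = a'.

Lemma card_le_subsingleton {T U : Type} (A : T -> Prop) (B : U -> Prop) :
  card_le A B -> subsingleton B -> subsingleton A.
Proof.
  intros [f [HfB Hinj]] HB a a' Ha Ha'.
  apply Hinj; [exact Ha|exact Ha'|apply HB; apply HfB; assumption].
Qed.

Lemma card_eq_subsingleton {T U : Type} (A : T -> Prop) (B : U -> Prop) :
  card_eq A B -> subsingleton A -> subsingleton B.
Proof.
  intros [f [_ [_ Hsurj]]] HA b b' Hb Hb'.
  destruct (Hsurj b Hb) as [a [Ha <-]].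
  destruct (Hsurj b' Hb') as [a' [Ha' <-]].
  f_equal. apply HA; assumption.
Qed.

Lemma card_eq_refl {T : Type} (A : T -> Prop) : card_eq A A.
Proof.
  exists (fun x => x). repeat split; auto.
  intros y Hy. exists y. auto.
Qed.

Lemma card_le_length {T : Type} (A B : list T) :
  NoDup A -> card_le (fun a => In a A) (fun b => In b B) ->
  (length A <= length B)%nat.
Proof.
  intros HA [f [HfB Hinj]].
  rewrite <- (length_map f A).
  apply NoDup_incl_length.
  - apply NoDup_map_NoDup_ForallPairs; [|exact HA].
    intros a a' Ha Ha'. apply Hinj; assumption.
  - intros b Hb. apply in_map_iff in Hb.
    destruct Hb as [a [<- Ha]]. apply HfB; exact Ha.
Qed.

Section Metric.
Variables (X : Type) (d : X -> X -> R).

Lemma list_compact (l : list X) : m_compact d (fun w => In w l).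
Proof.
  intros I U _ Hcov.
  induction l as [|a l IH].
  - exists nil. intros w [].
  - destruct (Hcov a (or_introl eq_refl)) as [i Hi].
    destruct IH as [li Hli].
    { intros w Hw. apply Hcov. right; exact Hw. }
    exists (i :: li). intros w [<-|Hw].
    + exists i. split; [left|]; auto.
    + destruct (Hli w Hw) as [j [Hj Hwj]].
      exists j. split; [right|]; auto.
Qed.

(* A distinguishable subset of W that is also a net for W cannot be
   enlarged: any further point would lie in a ball around one of its own. *)
Lemma distinguishable_net_maximal eps (W K : X -> Prop) :
  subset K W -> distinguishable d eps K -> is_net d eps W K ->
  maximal_distinguishable d eps W K.
Proof.
  intros HKW HK HKn. split; [exact HKW|]. split; [exact HK|].
  intros B HBW HB HKB b Hb.
  destruct (HKn b (HBW b Hb)) as [k [Hk Hbk]].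
  destruct (classic (b = k)) as [->|Hne]; [exact Hk|].
  exfalso. specialize (HB b k Hb (HKB k Hk) Hne).
  unfold cball in Hbk. lra.
Qed.

Hypothesis Hd : is_metric d.

Lemma dist_refl x : d x x = 0.
Proof. destruct Hd as [H _]. apply H; reflexivity. Qed.

Lemma dist_sym x y : d x y = d y x.
Proof. destruct Hd as [_ [H _]]. apply H. Qed.

Lemma dist_nonneg x y : 0 <= d x y.
Proof.
  destruct Hd as [_ [_ Htri]].
  pose proof (Htri x x y) as H. rewrite dist_refl, (dist_sym y x) in H. lra.
Qed.

Lemma dist_eq0 x y : d x y = 0 -> x = y.
Proof. destruct Hd as [H _]. apply H. Qed.

Lemma maximal_distinguishable_net eps (W A : X -> Prop) :
  0 <= eps -> maximal_distinguishable d eps W A -> is_net d eps W A.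
Proof.
  intros Heps [HAW [HA Hmax]] w Hw.
  apply NNPP. intro Hno.
  assert (Hfar : forall a, A a -> eps < d w a).
  { intros a Ha. apply Rnot_le_lt. intro Hle. apply Hno. exists a.
    unfold cball. auto. }
  assert (HwA : subset (fun x => A x \/ x = w) A).
  { apply Hmax.
    - intros x [Hx| ->]; auto.
    - intros x y [Hx| ->] [Hy| ->] Hne.
      + apply HA; auto.
      + rewrite dist_sym. apply Hfar; exact Hx.
      + apply Hfar; exact Hy.
      + congruence.
    - intros x Hx. left; exact Hx. }
  apply Hno. exists w. split; [apply HwA; right; reflexivity|].
  unfold cball. rewrite dist_refl. exact Heps.
Qed.

Lemma not_ultrametric_triple : ~ ultrametric d ->
  exists x y z, x <> y /\ 0 < Rmax (d x z) (d z y) /\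
                Rmax (d x z) (d z y) < d x y.
Proof.
  intro Hn. apply NNPP. intro Hno. apply Hn. intros x y z.
  apply Rnot_lt_le. intro Hlt. apply Hno. exists x, y, z.
  pose proof (Rmax_l (d x z) (d z y)). pose proof (Rmax_r (d x z) (d z y)).
  pose proof (dist_nonneg x z). pose proof (dist_nonneg z y).
  assert (Hxy : x <> y).
  { intros <-. rewrite dist_refl in Hlt. lra. }
  repeat split; [exact Hxy| |exact Hlt].
  apply Rnot_le_lt. intro Hle. apply Hxy.
  rewrite (dist_eq0 x z), (dist_eq0 z y); [reflexivity|lra|lra].
Qed.

Lemma triple_net x y z :
  is_net d (Rmax (d x z) (d z y)) (fun w => In w [x; y; z]) (fun c => In c [z]).
Proof.
  intros w [<-|[<-|[<-|[]]]]; exists z; (split; [left; reflexivity|]); unfold cball.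
  - apply Rmax_l.
  - rewrite dist_sym. apply Rmax_r.
  - rewrite dist_refl. apply Rle_trans with (d x z); [apply dist_nonneg|apply Rmax_l].
Qed.

Lemma pair_distinguishable x y eps :
  eps < d x y -> distinguishable d eps (fun w => In w [x; y]).
Proof.
  intros Hlt a b [<-|[<-|[]]] [<-|[<-|[]]] Hne; try congruence;
    first [exact Hlt | rewrite dist_sym; exact Hlt].
Qed.

Hypothesis Hu : ultrametric d.

(* "Within eps" is transitive: the closed eps-balls partition X. *)
Lemma within_trans eps a b c : d a b <= eps -> d b c <= eps -> d a c <= eps.
Proof.
  intros Hab Hbc. eapply Rle_trans; [apply (Hu a c b)|]. apply Rmax_lub; assumption.
Qed.

Lemma distinguishable_close_eq eps (A : X -> Prop) :
  distinguishable d eps A ->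
  forall a a' b, A a -> A a' -> d a b <= eps -> d a' b <= eps -> a = a'.
Proof.
  intros HA a a' b Ha Ha' Hab Ha'b.
  destruct (classic (a = a')) as [|Hne]; [assumption|].
  specialize (HA a a' Ha Ha' Hne).
  assert (d a a' <= eps) by (apply (within_trans eps a b a'); [|rewrite dist_sym]; assumption).
  lra.
Qed.

(* Every eps-distinguishable subset of W injects into every eps-net for W:
   send a point to a centre whose ball contains it. *)
Lemma distinguishable_le_net eps (W A C : X -> Prop) :
  subset A W -> distinguishable d eps A -> is_net d eps W C -> card_le A C.
Proof.
  intros HAW HA HC.
  set (centre := fun x => epsilon (inhabits x) (fun c => C c /\ cball d c eps x)).
  assert (Hcentre : forall x, A x -> C (centre x) /\ cball d (centre x) eps x).
  { intros x Hx. apply epsilon_spec. apply HC, HAW, Hx. }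
  exists centre. split.
  - intros x Hx. apply Hcentre, Hx.
  - intros x y Hx Hy Heq.
    destruct (Hcentre x Hx) as [_ Hx']. destruct (Hcentre y Hy) as [_ Hy'].
    unfold cball in *. rewrite Heq in Hx'.
    exact (distinguishable_close_eq eps A HA x y _ Hx Hy Hx' Hy').
Qed.

(* Choosing one point of W in each eps-class meeting W gives a subset of W
   that is simultaneously eps-distinguishable and an eps-net for W. *)
Lemma distinguishable_net_exists eps (W : X -> Prop) : 0 <= eps ->
  exists K, subset K W /\ distinguishable d eps K /\ is_net d eps W K.
Proof.
  intro Heps.
  set (cls := fun w x => W x /\ d x w <= eps).
  set (rep := fun w => epsilon (inhabits w) (cls w)).
  assert (Hrep : forall w, W w -> W (rep w) /\ d (rep w) w <= eps).
  { intros w Hw. apply (epsilon_spec (inhabits w) (cls w)).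
    exists w. split; [exact Hw|]. rewrite dist_refl. exact Heps. }
  (* close points of W have the same class, hence the same representative *)
  assert (Hrep_eq : forall w1 w2, W w2 -> d w1 w2 <= eps -> rep w1 = rep w2).
  { intros w1 w2 Hw2 H12.
    assert (Hcls : cls w1 = cls w2).
    { apply functional_extensionality. intro x. apply propositional_extensionality.
      unfold cls. split; intros [Hx Hxw]; split; try exact Hx.
      - exact (within_trans eps x w1 w2 Hxw H12).
      - rewrite dist_sym in H12. exact (within_trans eps x w2 w1 Hxw H12). }
    unfold rep. rewrite Hcls. apply epsilon_inh_irrelevance.
    exists w2. split; [exact Hw2|]. rewrite dist_refl. exact Heps. }
  exists (fun x => exists w, W w /\ x = rep w). repeat split.
  - intros x [w [Hw ->]]. apply Hrep, Hw.
  - intros x y [w1 [Hw1 ->]] [w2 [Hw2 ->]] Hne.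
    apply Rnot_le_lt. intro Hle. apply Hne, Hrep_eq; [exact Hw2|].
    destruct (Hrep w1 Hw1) as [_ H1]. destruct (Hrep w2 Hw2) as [_ H2].
    rewrite dist_sym in H1.
    exact (within_trans eps _ _ _ H1 (within_trans eps _ _ _ Hle H2)).
  - intros w Hw. exists (rep w). split; [exists w; auto|].
    unfold cball. rewrite dist_sym. apply Hrep, Hw.
Qed.

Lemma cball_open c eps : 0 < eps -> is_open d (cball d c eps).
Proof.
  intros Heps x Hx. exists eps. split; [exact Heps|].
  intros y Hy. unfold cball in *. apply (within_trans eps y x c); lra.
Qed.

(* Finite version of distinguishable_net_exists: the balls around a finite
   list l of centres can be re-covered by balls around a duplicate-free
   eps-distinguishable list of points of W. *)
Lemma finite_distinguishable_net eps (W : X -> Prop) (l : list X) :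
  exists L, NoDup L /\ (forall x, In x L -> W x) /\
    distinguishable d eps (fun c => In c L) /\
    (forall w, W w -> (exists c, In c l /\ cball d c eps w) ->
               exists a, In a L /\ cball d a eps w).
Proof.
  unfold cball.
  induction l as [|c l IH].
  - exists nil. repeat split; [constructor|intros x []|intros x y []|].
    intros w _ [c [[] _]].
  - destruct IH as [L [HN [HLW [HLd HLcov]]]].
    destruct (classic (exists w0, W w0 /\ d w0 c <= eps /\
                                  ~ exists a, In a L /\ d w0 a <= eps))
      as [[w0 [Hw0 [Hw0c Hno]]] | Hcovered].
    + (* add a point w0 of the ball around c that L does not yet cover *)
      assert (Hfar : forall a, In a L -> eps < d w0 a).
      { intros a Ha. apply Rnot_le_lt. intro. apply Hno. eauto. }
      exists (w0 :: L). repeat split.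
      * constructor; [|exact HN]. intro Hin. apply Hfar in Hin.
        rewrite dist_refl in Hin. pose proof (dist_nonneg w0 c). lra.
      * intros x [<-|Hx]; auto.
      * intros x y [<-|Hx] [<-|Hy] Hne; try congruence.
        -- apply Hfar; exact Hy.
        -- rewrite dist_sym. apply Hfar; exact Hx.
        -- apply HLd; assumption.
      * intros w Hw [c' [[<-|Hc'] Hwc]].
        -- exists w0. split; [left; reflexivity|].
           apply (within_trans eps w c w0); [|rewrite dist_sym]; assumption.
        -- destruct (HLcov w Hw) as [a [Ha Hwa]]; [eauto|].
           exists a. split; [right|]; assumption.
    + exists L. repeat split; try assumption.
      intros w Hw [c' [[<-|Hc'] Hwc]].
      * apply NNPP. intro Hno. apply Hcovered. exists w. auto.
      * apply HLcov; eauto.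
Qed.

End Metric.

Section Equivalences.
Variables (X : Type) (d : X -> X -> R).
Hypothesis Hd : is_metric d.

(* (i) => (ii): the set K of distinguishable net points realises
   M*, both covering numbers and M-hat. *)
Lemma ultrametric_cardinals : ultrametric d ->
  forall (W : X -> Prop) (eps : R), 0 < eps ->
    exists K : X -> Prop,
      Mstar_val d eps W K /\ Nhat_val d eps (fun _ => True) W K /\
      Nhat_val d eps W W K /\ Mhat_val d eps W K.
Proof.
  intros Hu W eps Heps.
  destruct (distinguishable_net_exists X d Hd Hu eps W) as [K [HKW [HKd HKn]]]; [lra|].
  assert (HK_le_nets : forall C, is_net d eps W C -> card_le K C)
    by (intros C; exact (distinguishable_le_net X d Hd Hu eps W K C HKW HKd)).
  exists K. split; [split|split; [|split]].
  - intros A HAW HA. exact (distinguishable_le_net X d Hd Hu eps W A K HAW HA HKn).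
  - intros U K' HK'. exact (HK' K HKW HKd).
  - exists K. split; [intros x _; exact I|split; [exact HKn|split; [|apply card_eq_refl]]].
    intros C _ HC. exact (HK_le_nets C HC).
  - exists K. split; [exact HKW|split; [exact HKn|split; [|apply card_eq_refl]]].
    intros C _ HC. exact (HK_le_nets C HC).
  - exists K. split; [apply distinguishable_net_maximal; assumption|split; [|apply card_eq_refl]].
    intros A HA. apply HK_le_nets.
    apply (maximal_distinguishable_net X d Hd); [lra|exact HA].
Qed.

(* (ii) => (i): on a non-ultrametric triple, the minimal net is no larger
   than {z}, yet the distinguishable pair {x, y} must inject into it. *)
Lemma cardinals_ultrametric :
  (forall (W : X -> Prop) (eps : R), 0 < eps ->
    exists K : X -> Prop,
      Mstar_val d eps W K /\ Nhat_val d eps (fun _ => True) W K /\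
      Nhat_val d eps W W K /\ Mhat_val d eps W K) ->
  ultrametric d.
Proof.
  intro H. apply NNPP. intro Hn.
  destruct (not_ultrametric_triple X d Hd Hn) as [x [y [z [Hxy [Hpos Hlt]]]]].
  destruct (H (fun w => In w [x; y; z]) _ Hpos)
    as [K [[HKbound _] [_ [[C [_ [_ [HCmin HCK]]]] _]]]].
  assert (HK1 : subsingleton K).
  { apply (card_eq_subsingleton C K HCK).
    apply (card_le_subsingleton C (fun c => In c [z])).
    - apply HCmin; [intros c [<-|[]]; simpl; auto|apply triple_net, Hd].
    - intros a b [<-|[]] [<-|[]]; reflexivity. }
  apply Hxy. apply (card_le_subsingleton (fun w => In w [x; y]) K); [|exact HK1|left; reflexivity|right; left; reflexivity].
  apply HKbound; [intros w [<-|[<-|[]]]; simpl; auto|].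
  apply (pair_distinguishable X d Hd), Hlt.
Qed.

(* (i) => (iii): a finite ball cover of the compact W yields a finite
   distinguishable net L, whose length is both N_eps(W) and M_eps(W). *)
Lemma ultrametric_cov_pack : ultrametric d ->
  forall (W : X -> Prop) (eps : R), m_compact d W -> 0 < eps ->
    exists n : nat, cov_num d eps W n /\ pack_num d eps W n.
Proof.
  intros Hu W eps Hc Heps.
  destruct (Hc X (fun c => cball d c eps)) as [l Hl].
  - intro c. exact (cball_open X d Hu c eps Heps).
  - intros w Hw. exists w. unfold cball. rewrite (dist_refl X d Hd). lra.
  - destruct (finite_distinguishable_net X d Hd Hu eps W l) as [L [HN [HLW [HLd HLcov]]]].
    assert (HLn : is_net d eps W (fun c => In c L)).
    { intros w Hw. apply HLcov; [exact Hw|apply Hl, Hw]. }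
    exists (length L). repeat split.
    + exists L. auto.
    + intros l' _ _ Hl'. apply card_le_length; [exact HN|].
      exact (distinguishable_le_net X d Hd Hu eps W _ _ HLW HLd Hl').
    + exists L. auto.
    + intros l' HN' Hl'W Hl'd. apply card_le_length; [exact HN'|].
      exact (distinguishable_le_net X d Hd Hu eps W _ _ Hl'W Hl'd HLn).
Qed.

(* (iii) => (i): on a non-ultrametric triple, N_eps <= 1 < 2 <= M_eps. *)
Lemma cov_pack_ultrametric :
  (forall (W : X -> Prop) (eps : R), m_compact d W -> 0 < eps ->
    exists n : nat, cov_num d eps W n /\ pack_num d eps W n) ->
  ultrametric d.
Proof.
  intro H. apply NNPP. intro Hn.
  destruct (not_ultrametric_triple X d Hd Hn) as [x [y [z [Hxy [Hpos Hlt]]]]].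
  destruct (H _ _ (list_compact X d [x; y; z]) Hpos) as [n [[_ Hcov] [_ Hpack]]].
  assert (n <= 1)%nat.
  { apply (Hcov [z]); [constructor; [intros []|constructor]| |apply triple_net, Hd].
    intros w [<-|[]]. simpl; auto. }
  assert (2 <= n)%nat.
  { apply (Hpack [x; y]).
    - constructor; [intros [Heq|[]]; congruence|constructor; [intros []|constructor]].
    - intros w [<-|[<-|[]]]; simpl; auto.
    - apply (pair_distinguishable X d Hd), Hlt. }
  lia.
Qed.

End Equivalences.

Theorem theorem2p9 (X : Type) (d : X -> X -> R) (Hd : is_metric d) :
  (ultrametric d <->
   (forall (W : X -> Prop) (eps : R), 0 < eps ->
      exists K : X -> Prop,
        Mstar_val d eps W K /\
        Nhat_val d eps (fun _ => True) W K /\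
        Nhat_val d eps W W K /\
        Mhat_val d eps W K)) /\
  (ultrametric d <->
   (forall (W : X -> Prop) (eps : R), m_compact d W -> 0 < eps ->
      exists n : nat, cov_num d eps W n /\ pack_num d eps W n)).
Proof.
  split; split.
  - exact (ultrametric_cardinals X d Hd).
  - exact (cardinals_ultrametric X d Hd).
  - exact (ultrametric_cov_pack X d Hd).
  - exact (cov_pack_ultrametric X d Hd).
Qed.
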